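(* Let $V$ be a real sequence and suppose that for some $a>1$, $b>1$, the equation $(-\Delta+V)\psi=0$ has a solution $\psi^-$ with $a^{n^b}\psi^-_n\to1$ as $n\to\infty$. Then: (i) every solution $\psi$ linearly independent of $\psi^-$ increases rapidly as $n\to\infty$, but $a^{-n^b}\psi_n\to0$; (ii) for any solution $\psi$, the product $\psi_n\psi^-_n$ is bounded independently of $n$; (iii) given any boundary condition $c\psi_1+d\psi_2=0$, if $0\notin\mathrm{sp}(-\Delta+V)$, then the Green matrix of $-\Delta+V$ on $n\ge1$ is uniformly bounded.
   Context: $(\Delta f)_n=f_{n+1}+f_{n-1}-2f_n$; $(-\Delta+V)\psi=0$ means $-\psi_{n+1}-\psi_{n-1}+(2+V_n)\psi_n=0$ for $n\ge1$. The Green matrix with the given boundary condition is $G_{mn}=\psi^+_{\min(m,n)}\psi^-_{\max(m,n)}/W$, where $\psi^+$ satisfies the boundary condition and $W=\psi^-_n\psi^+_{n+1}-\psi^-_{n+1}\psi^+_n$. *)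

From HB Require Import structures.
From mathcomp Require Import all_boot all_order all_algebra.
From mathcomp Require Import all_classical all_reals all_analysis.
Set Implicit Arguments. Unset Strict Implicit. Unset Printing Implicit Defensive.
Import Order.TTheory GRing.Theory Num.Theory.
Import numFieldNormedType.Exports.
Local Open Scope ring_scope.
Local Open Scope classical_set_scope.

(* psi : nat -> R is a solution of (-Delta + V) psi = 0, i.e.
   -psi_{n+1} - psi_{n-1} + (2 + V_n) psi_n = 0 for all n >= 1. *)
Definition is_solution {R : realType} (V psi : nat -> R) : Prop :=
  forall n : nat, (1 <= n)%N ->
    - psi n.+1 - psi n.-1 + (2 + V n) * psi n = 0.

Definition lin_indep {R : realType} (f g : nat -> R) : Prop :=
  forall al be : R, (forall n, al * f n + be * g n = 0) -> al = 0 /\ be = 0.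

(* Wronskian W = psim_n psip_{n+1} - psim_{n+1} psip_n (constant in n for two
   solutions); we evaluate it at n = 1. *)
Definition wronskian {R : realType} (psim psip : nat -> R) (n : nat) : R :=
  psim n * psip n.+1 - psim n.+1 * psip n.

Definition green {R : realType} (psim psip : nat -> R) (m n : nat) : R :=
  psip (minn m n) * psim (maxn m n) / wronskian psim psip 1.

Definition sq_summable {R : realType} (u : nat -> R) : Prop :=
  cvgn (series (fun k => u k.+1 ^+ 2)).

(* 0 is an eigenvalue of -Delta+V on n >= 1 with boundary condition
   c psi_1 + d psi_2 = 0: there is a nonzero square-summable solution
   satisfying the boundary condition. *)
Definition zero_eigenvalue {R : realType} (V : nat -> R) (c d : R) : Prop :=
  exists psi : nat -> R,
    [/\ is_solution V psi, c * psi 1%N + d * psi 2%N = 0,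
        sq_summable psi & exists n, (1 <= n)%N /\ psi n <> 0].

From HB Require Import structures.
From mathcomp Require Import all_boot all_order all_algebra.
From mathcomp Require Import all_classical all_reals all_analysis.
From mathcomp Require Import ring lra.
Import Order.TTheory GRing.Theory Num.Theory.
Import numFieldNormedType.Exports.
Local Open Scope ring_scope.
Local Open Scope classical_set_scope.

(* Write g n := a ^ (n ^ b).  Since (n+1)^b >= n^b + n^(b-1), the ratio
   g n.+1 / g n >= a ^ (n ^ (b-1)) tends to infinity, so psim is eventually
   positive with r n := psim n.+1 / psim n -> 0.  For any solution psi the
   Wronskian identity psim n * psi n.+1 = W + psim n.+1 * psi n turns
   p n := psi n * psim n into p n.+1 = r n * (W + r n * p n): hence p is bounded
   (ii), p -> 0 and psim n * psi n.+1 -> W.  If psi is independent of psim then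
   W <> 0, so |psi n.+1| / |psi n| = |psim n * psi n.+1| / |p n| -> oo, which
   gives the growth statements of (i), and psi n / g n = p n / (g n * psim n)
   -> 0.  For (iii), once |psim| is nonincreasing, |psip m * psim n| <=
   |psip m * psim m| for m <= n, and the finitely many earlier rows are bounded
   directly. *)

Section Solutions.
Context {R : realType} {V : nat -> R}.
Implicit Types f g : nat -> R.

Lemma solutionS {f} : is_solution V f ->
  forall n, f n.+2 = (2 + V n.+1) * f n.+1 - f n.
Proof.
by move=> fV n; have /= e := fV n.+1 isT; rewrite -[LHS]addr0 -e; ring.
Qed.

Lemma solutionZ c f : is_solution V f -> is_solution V (fun n => c * f n).
Proof. by move=> fV n n1; rewrite -(mulr0 c) -(fV n n1); ring. Qed.

Lemma solution_eq {f g} N : is_solution V f -> is_solution V g ->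
  f N = g N -> f N.+1 = g N.+1 -> f =1 g.
Proof.
move=> fV gV fgN fgSN.
pose agree n := f n = g n /\ f n.+1 = g n.+1.
have agreeS n : agree n <-> agree n.+1.
  rewrite /agree (solutionS fV) (solutionS gV); split=> -[e1 e2].
    by split=> //; rewrite e1 e2.
  by split=> //; move: e2; rewrite e1 => /addrI/oppr_inj.
have down n : agree n -> agree 0 by elim: n => // n IH /(agreeS n)/IH.
have up n : agree 0 -> agree n by elim: n => // n IH /IH/(agreeS n).
by move=> n; have [] := up n (down N (conj fgN fgSN)).
Qed.

Lemma wronskian_const {f g} n : is_solution V f -> is_solution V g ->
  wronskian f g n = wronskian f g 0.
Proof.
move=> fV gV; elim: n => [//|n <-].
by rewrite /wronskian (solutionS fV) (solutionS gV); ring.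
Qed.

Lemma wronskian_crossE {f g} n : is_solution V f -> is_solution V g ->
  f n * g n.+1 = wronskian f g 0 + f n.+1 * g n.
Proof. by move=> fV gV; rewrite -(wronskian_const n fV gV) /wronskian; ring. Qed.

Lemma lin_indep_wronskian_neq0 {f g} N : is_solution V f -> is_solution V g ->
  lin_indep g f -> f N != 0 -> wronskian f g 0 != 0.
Proof.
move=> fV gV fg fN0; apply/eqP => W0.
pose C := g N / f N.
have gCf : g =1 (fun n => C * f n).
  apply: (solution_eq N) => //; first exact: solutionZ.
    by rewrite /C divfK.
  apply: (mulfI fN0); rewrite wronskian_crossE // W0 add0r /C.
  by field.
have [] := fg 1 (- C) => [n|/eqP]; first by rewrite gCf; ring.
by rewrite oner_eq0.
Qed.

End Solutions.

Section RealSequences.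
Context {R : realType}.
Implicit Types u v : nat -> R.

Lemma norm_le_sum_prefix u {N n} : (n < N)%N -> `|u n| <= \sum_(k < N) `|u k|.
Proof.
by move=> nN; rewrite (bigD1 (Ordinal nN)) //= ler_wpDr // sumr_ge0.
Qed.

Lemma bounded_from {u} N (B : R) :
  (forall n, (N <= n)%N -> `|u n| <= B) -> exists M : R, forall n, `|u n| <= M.
Proof.
move=> uB; exists (B + \sum_(k < N) `|u k|) => n.
have [Nn|nN] := leqP N n; first by rewrite ler_wpDr ?uB ?sumr_ge0.
have B0 : 0 <= B := le_trans (normr_ge0 _) (uB N (leqnn N)).
by rewrite ler_wpDl // norm_le_sum_prefix.
Qed.

Lemma bounded_of_halving u (C : R) N :
  (forall n, (N <= n)%N -> `|u n.+1| <= C + `|u n| / 2) ->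
  exists M : R, forall n, `|u n| <= M.
Proof.
move=> uS; pose B := Num.max `|u N| (2 * C).
have BC : 2 * C <= B by rewrite le_max lexx orbT.
apply: (bounded_from N B) => n /subnK <-.
elim: (n - N)%N => [|k IH]; first by rewrite add0n le_max lexx.
by rewrite addSn (le_trans (uS _ (leq_addl _ _))) //; lra.
Qed.

Lemma norm_nonincreasing_from u N :
  (forall n, (N <= n)%N -> `|u n.+1| <= `|u n|) ->
  forall m n, (N <= m)%N -> (m <= n)%N -> `|u n| <= `|u m|.
Proof.
move=> uS m n Nm /subnK <-; elim: (n - m)%N => [|k IH]; first by rewrite add0n.
by rewrite addSn (le_trans _ IH) // uS // (leq_trans Nm) ?leq_addl.
Qed.

Lemma cvg0_mul_bounded {u v} {M : R} : u @ \oo --> 0 ->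
  (forall n, `|v n| <= M) -> (fun n => u n * v n) @ \oo --> 0.
Proof.
move=> u0 vM; have M0 : 0 <= M := le_trans (normr_ge0 _) (vM 0%N).
apply/cvgrPdist_le => e e0.
have eM : 0 < e / (M + 1) by rewrite divr_gt0 //; lra.
have [N _ uN] := cvgr0_norm_le _ u0 _ eM; exists N => // n /uN un.
rewrite sub0r normrN normrM.
apply: le_trans (ler_pM (normr_ge0 _) (normr_ge0 _) un (vM n)) _.
by rewrite mulrAC ler_pdivrMr; [nra | lra].
Qed.

Lemma ratio_unbounded_cvgy {u} :
  (forall K, 0 < K -> \forall n \near \oo, K * `|u n| < `|u n.+1|) ->
  forall r, 0 < r -> (fun n => `|u n| / r ^+ n) @ \oo --> +oo.
Proof.
move=> uK r r0; have r2 : 0 < 2 * r by rewrite mulr_gt0.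
have [N _ uN] := uK _ r2; set m := N.+1.
have um : 0 < `|u m|.
  by apply: le_lt_trans (uN N (leqnn N)); rewrite mulr_ge0 // ltW.
have grow k : (2 * r) ^+ k * `|u m| <= `|u (k + m)%N|.
  elim: k => [|k IH]; first by rewrite mul1r.
  rewrite addSn; apply: le_trans _ (ltW (uN _ _)).
    by rewrite exprS -mulrA ler_wpM2l // ltW.
  by rewrite /mkset /m addnS leqW // leq_addl.
pose c := `|u m| / r ^+ m.
have c0 : 0 < c by rewrite divr_gt0 // exprn_gt0.
rewrite -(cvg_shiftn m); apply/cvgryPge => A.
have [K _ KA] := nbhs_infty_ger (A / c); exists K => // k /KA Ak /=.
apply: (@le_trans _ _ (2 ^+ k * c)).
  apply: (@le_trans _ _ (k%:R * c)); first by rewrite -ler_pdivrMr.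
  by rewrite ler_pM2r // -natrX ler_nat ltnW // ltn_expl.
rewrite ler_pdivlMr ?exprn_gt0 //.
suff -> : 2 ^+ k * c * r ^+ (k + m) = (2 * r) ^+ k * `|u m| by exact: grow.
by rewrite /c exprMn exprD; field; rewrite expf_neq0 // gt_eqF.
Qed.

End RealSequences.

Lemma powR_succ_ge {R : realType} (x c : R) : 0 < x -> 1 <= c ->
  x `^ c + x `^ (c - 1) <= (x + 1) `^ c.
Proof.
move=> x0 c1.
have peel y : 0 < y -> y `^ c = y * y `^ (c - 1).
  move=> y0; rewrite -[in LHS](subrKC 1 c) (powRD (r := 1)) ?powRr1 ?ltW //.
  by rewrite (gt_eqF y0) implybT.
have c0 : 0 <= c - 1 by rewrite subr_ge0.
rewrite !peel ?addr_gt0 // mulrDl mul1r.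
have mono : x `^ (c - 1) <= (x + 1) `^ (c - 1).
  by apply: (ge0_ler_powR c0); rewrite ?nnegrE ?addr_ge0 ?lerDl ?(ltW x0).
by rewrite lerD // ler_pM2l.
Qed.

Lemma cvgn_powR_pinfty {R : realType} (c : R) : 0 < c ->
  n%:R `^ c @[n --> \oo] --> +oo.
Proof.
move=> c0; apply/cvgryPge => A.
have [N _ NA] := nbhs_infty_ger (expR (A / c)).
exists N.+1 => // n /= Nn.
have n0 : (0 : R) < n%:R by rewrite ltr0n (leq_ltn_trans _ Nn).
have lnA : A / c <= ln n%:R.
  by rewrite -ler_expR lnK ?posrE // (le_trans (NA _ (ltnW Nn))) ?ler_nat.
rewrite /powR gt_eqF //; apply: le_trans (expR_ge1Dx _).
by rewrite ler_pdivrMr // in lnA; lra.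
Qed.

Lemma weight_ratio_cvg0 {R : realType} {a b : R} : 1 < a -> 1 < b ->
  (fun n : nat => a `^ (n%:R `^ b) / a `^ (n.+1%:R `^ b)) @ \oo --> 0.
Proof.
move=> a1 b1.
have a0 : 0 < a := lt_trans ltr01 a1.
have la : 0 < ln a by rewrite ln_gt0.
have b0 : 0 < b - 1 by rewrite subr_gt0.
have lay : (fun n : nat => ln a * n%:R `^ (b - 1)) @ \oo --> +oo.
  apply/cvgryPge => A.
  have [N _ NA] := (cvgryPge _).1 (cvgn_powR_pinfty (b - 1) b0) (A / ln a).
  by exists N => // n /NA /=; rewrite ler_pdivrMr // mulrC.
have h0 : (fun n : nat => expR (- (ln a * n%:R `^ (b - 1)))) @ \oo --> 0.
  exact: cvg_comp _ _ lay (@cvgr_expR R).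
apply: (squeeze_cvgr _ (cvg_cst 0) h0).
exists 1%N => // n /= n1; rewrite divr_ge0 ?powR_ge0 //=.
have aE y : a `^ y = expR (y * ln a) by rewrite /powR gt_eqF.
rewrite !aE -expRB ler_expR.
have n0 : (0 : R) < n%:R by rewrite ltr0n.
have := powR_succ_ge _ _ n0 (ltW b1); rewrite natr1.
nra.
Qed.

Section DecayingSolution.
Context {R : realType} {a b : R} {V psim : nat -> R}.
Hypotheses (a1 : 1 < a) (b1 : 1 < b) (psim_sol : is_solution V psim)
  (psim_asym : (fun n : nat => a `^ (n%:R `^ b) * psim n) @ \oo --> (1 : R)).

Let weight_gt0 x : 0 < a `^ x := powR_gt0 x (lt_trans ltr01 a1).

Lemma psim_gt0 : \forall n \near \oo, 0 < psim n.
Proof.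
have [N _ HN] := cvgr_dist_lt _ _ psim_asym _ ltr01.
exists N => // n /HN /=.
rewrite -(pmulr_rgt0 _ (weight_gt0 (n%:R `^ b))) ltr_norml.
by move=> /andP[_]; lra.
Qed.

Lemma psim_ratio_cvg0 : (fun n => psim n.+1 / psim n) @ \oo --> 0.
Proof.
pose g n := a `^ (n%:R `^ b); pose w n := g n * psim n.
have -> : (fun n => psim n.+1 / psim n)
    = (fun n => w n.+1 / w n * (g n / g n.+1)).
  (* The identity also holds where psim n = 0, both sides being 0, so the
     inverse of psim n can be treated as an independent unknown. *)
  apply/funext => n; rewrite /w invfM; move: (psim n)^-1 => x.
  by field; rewrite !gt_eqF ?weight_gt0.
rewrite -[X in _ --> X](mulr0 1).
apply: cvgM; last exact: weight_ratio_cvg0 a1 b1.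
rewrite -[X in _ --> X](divr1 1); apply: cvgM; first by rewrite (cvg_shiftS w).
exact: cvgV (oner_neq0 _) psim_asym.
Qed.

Lemma psim_ratio_le eps : 0 < eps ->
  \forall n \near \oo, 0 < psim n /\ `|psim n.+1| <= eps * psim n.
Proof.
move=> e0; have [N1 _ HN1] := psim_gt0.
have [N2 _ HN2] := cvgr0_norm_le _ psim_ratio_cvg0 _ e0.
exists (maxn N1 N2) => // n; rewrite /= geq_max => /andP[/HN1 p0 /HN2].
by rewrite normrM normfV (gtr0_norm p0) ler_pdivrMr.
Qed.

Context {psi : nat -> R}.
Hypothesis psi_sol : is_solution V psi.
Local Notation W := (wronskian psim psi 0).

Lemma solution_prod_bounded : exists M : R, forall n, `|psi n * psim n| <= M.
Proof.
have [N _ HN] := psim_ratio_le (1 / 2) ltac:(lra).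
apply: (bounded_of_halving _ (`|W| / 2) N) => n /HN [p0 r].
have e := wronskian_crossE n psim_sol psi_sol.
set x := psim n in p0 r e *; set y := psim n.+1 in r e *.
set s := psi n in e *; set t := psi n.+1 in e *.
have ht : x * `|t| <= `|W| + x * `|s| / 2.
  rewrite -[x]gtr0_norm // -normrM e; apply: le_trans (ler_normD _ _) _.
  rewrite lerD2l normrM (gtr0_norm p0).
  by apply: le_trans (ler_wpM2r (normr_ge0 s) r) _; lra.
have hy : `|t| * `|y| <= `|t| * (1 / 2 * x) by rewrite ler_wpM2l.
have := mulr_ge0 (ltW p0) (normr_ge0 s).
rewrite !normrM (gtr0_norm p0); lra.
Qed.

Lemma solution_shift_prod_cvg0 : (fun n => psim n.+1 * psi n) @ \oo --> 0.
Proof.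
have [M HM] := solution_prod_bounded.
have E : \forall n \near \oo,
    psim n.+1 / psim n * (psi n * psim n) = psim n.+1 * psi n.
  have [N _ HN] := psim_gt0; exists N => // n /HN /= p0.
  by rewrite mulrCA divfK ?gt_eqF // mulrC.
apply: cvg_trans; first exact: near_eq_cvg E.
exact: cvg0_mul_bounded psim_ratio_cvg0 HM.
Qed.

Lemma solution_cross_cvg : (fun n => psim n * psi n.+1) @ \oo --> W.
Proof.
have -> : (fun n => psim n * psi n.+1) = (fun n => W + psim n.+1 * psi n).
  by apply/funext => n; exact: wronskian_crossE n psim_sol psi_sol.
rewrite -[X in _ --> X]addr0; apply: cvgD; first exact: cvg_cst.
exact: solution_shift_prod_cvg0.
Qed.

Lemma solution_prod_cvg0 : (fun n => psi n * psim n) @ \oo --> 0.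
Proof.
rewrite -[X in _ --> X](mul0r W) -cvg_shiftS.
have E : \forall n \near \oo,
    psim n.+1 / psim n * (psim n * psi n.+1) = psi n.+1 * psim n.+1.
  have [N _ HN] := psim_gt0; exists N => // n /HN /= p0.
  by rewrite -mulrA mulKf ?gt_eqF // mulrC.
apply: cvg_trans; first exact: near_eq_cvg E.
exact: cvgM psim_ratio_cvg0 solution_cross_cvg.
Qed.

Lemma solution_over_weight_cvg0 :
  (fun n : nat => psi n / a `^ (n%:R `^ b)) @ \oo --> 0.
Proof.
rewrite -[X in _ --> X](mul0r (1 : R)^-1).
have E : \forall n \near \oo, psi n * psim n / (a `^ (n%:R `^ b) * psim n)
    = psi n / a `^ (n%:R `^ b).
  have [N _ HN] := psim_gt0; exists N => // n /HN /= p0.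
  by rewrite invfM mulrACA divff ?gt_eqF // mulr1.
apply: cvg_trans; first exact: near_eq_cvg E.
exact: cvgM solution_prod_cvg0 (cvgV (oner_neq0 _) psim_asym).
Qed.

Lemma green_bounded : exists M : R, forall m n, `|green psim psi m n| <= M.
Proof.
have [N _ HN] := psim_ratio_le 1 ltr01.
have psim_dec : forall m n, (N <= m)%N -> (m <= n)%N -> `|psim n| <= `|psim m|.
  apply: norm_nonincreasing_from => n /HN [p0].
  by rewrite mul1r (gtr0_norm p0).
have [P HP] := solution_prod_bounded.
have [Bm HBm] := bounded_from N `|psim N| (fun n => psim_dec N n (leqnn N)).
pose Bp := \sum_(k < N) `|psi k|.
have P0 : 0 <= P := le_trans (normr_ge0 _) (HP 0%N).
have Bm0 : 0 <= Bm := le_trans (normr_ge0 _) (HBm 0%N).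
have Bp0 : 0 <= Bp by rewrite sumr_ge0.
have key m n : (m <= n)%N -> `|psi m * psim n| <= P + Bp * Bm.
  move=> mn; rewrite normrM; have [Nm|mN] := leqP N m.
    apply: le_trans (ler_wpM2l (normr_ge0 _) (psim_dec m n Nm mn)) _.
    by rewrite -normrM (le_trans (HP m)) // lerDl mulr_ge0.
  apply: le_trans (ler_pM (normr_ge0 _) (normr_ge0 _)
    (norm_le_sum_prefix psi mN) (HBm n)) _.
  by rewrite lerDr.
exists ((P + Bp * Bm) * `|(wronskian psim psi 1)^-1|) => m n.
by rewrite /green normrM ler_wpM2r // key // leq_max geq_minl.
Qed.

Hypothesis psi_indep : lin_indep psi psim.

Lemma solution_ratio_unbounded K : 0 < K ->
  \forall n \near \oo, K * `|psi n| < `|psi n.+1|.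
Proof.
move=> K0; have [N _ HN] := psim_gt0.
have W0 : 0 < `|W|.
  by rewrite normr_gt0 (lin_indep_wronskian_neq0 N psim_sol psi_sol psi_indep) //
    (lt0r_neq0 (HN N (leqnn N))).
have [Np _ HNp] := cvgr_dist_lt _ _ solution_prod_cvg0 _
  (divr_gt0 W0 (mulr_gt0 (ltr0Sn _ 1) K0)).
have [Nq _ HNq] :=
  cvgr_dist_lt _ _ solution_cross_cvg _ (divr_gt0 W0 (ltr0Sn _ 1)).
exists (maxn N (maxn Np Nq)) => // n; rewrite /= !geq_max => /and3P[].
move=> /HN p0 /HNp /= hp /HNq /= hq.
rewrite sub0r normrN normrM (gtr0_norm p0) ltr_pdivlMr ?mulr_gt0 // in hp.
have : `|W| - `|psim n * psi n.+1| <= `|W - psim n * psi n.+1|.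
  exact: lerB_dist.
rewrite normrM (gtr0_norm p0) -(ltr_pM2r p0) => hW.
nra.
Qed.

End DecayingSolution.

Theorem corollary3 (R : realType) (V psim : nat -> R) (a b : R) :
  1 < a -> 1 < b ->
  is_solution V psim ->
  (fun n : nat => a `^ (n%:R `^ b) * psim n) @ \oo --> (1 : R) ->
  (forall psi : nat -> R, is_solution V psi -> lin_indep psi psim ->
     [/\ (\forall n \near \oo, `|psi n| < `|psi n.+1|),
         (forall r : R, 0 < r -> (fun n : nat => `|psi n| / r ^+ n) @ \oo --> +oo)
       & (fun n : nat => psi n / a `^ (n%:R `^ b)) @ \oo --> (0 : R)]) /\
  (forall psi : nat -> R, is_solution V psi ->
     exists M : R, forall n : nat, `|psi n * psim n| <= M) /\
  (forall c d : R, (c, d) != (0, 0) -> ~ zero_eigenvalue V c d ->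
     forall psip : nat -> R, is_solution V psip ->
       c * psip 1%N + d * psip 2%N = 0 ->
       (exists n, psip n <> 0) ->
       exists M : R, forall m n : nat, (1 <= m)%N -> (1 <= n)%N ->
         `|green psim psip m n| <= M).
Proof.
move=> a1 b1 psim_sol psim_asym; split; [|split].
- move=> psi psi_sol psi_indep.
  have unbounded :=
    solution_ratio_unbounded a1 b1 psim_sol psim_asym psi_sol psi_indep.
  split.
  - by have [N _ HN] := unbounded 1 ltr01; exists N => // n /HN; rewrite /= mul1r.
  - exact: ratio_unbounded_cvgy unbounded.
  - exact (solution_over_weight_cvg0 a1 b1 psim_sol psim_asym psi_sol).
- move=> psi psi_sol.
  exact (solution_prod_bounded a1 b1 psim_sol psim_asym psi_sol).
- (* The bound holds for every solution psip; the spectral hypotheses only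
     ensure W <> 0, i.e. that green is indeed the Green matrix. *)
  move=> c d _ _ psip psip_sol _ _.
  have [M HM] := green_bounded a1 b1 psim_sol psim_asym psip_sol.
  by exists M => m n _ _.
Qed.
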